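(* Let $\mathcal F=\{f_1,\dots,f_M\}$ be a frame for $\mathbb C^N$ with range of coefficients $W\subset\mathbb C^M$, and suppose $\mathbb M^{\mathcal F}$ is injective. Then for every $S\subset\{1,\dots,M\}$, if $L^S\cap W\neq\{0\}$ then $L^{S^\complement}\cap W=\{0\}$. Consequently, for every such $S$, either $\{f_j\}_{j\in S}$ or $\{f_j\}_{j\in S^\complement}$ spans $\mathbb C^N$.
   Context: A frame for $\mathbb C^N$ is a spanning family $\{f_1,\dots,f_M\}$; $W=\{(\langle x,f_k\rangle)_{k=1}^M : x\in\mathbb C^N\}$ with $\langle x,y\rangle=\sum_k x_k\overline{y_k}$. For $S\subset\{1,\dots,M\}$, $L^S=\{a\in\mathbb C^M: a_i=0\ \forall i\in S\}$ and $S^\complement$ is the complement. $\mathbb M^{\mathcal F}$ is injective means $|\langle x,f_k\rangle|=|\langle y,f_k\rangle|$ for all $k$ implies $y=cx$ for some $c\in\mathbb C$, $|c|=1$. *)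

From HB Require Import structures.
From mathcomp Require Import all_boot all_order all_algebra.
From mathcomp Require Import reals.
From mathcomp.real_closed Require Import complex.
Set Implicit Arguments. Unset Strict Implicit. Unset Printing Implicit Defensive.
Import Order.TTheory GRing.Theory Num.Theory.
Local Open Scope ring_scope.

Section FrameDefs.
Variables (R : realType) (N M : nat).
Local Notation C := R[i].

Definition cdot (x y : 'rV[C]_N) : C := \sum_(k < N) x 0 k * (y 0 k)^*.

Definition coeffs (f : 'I_M -> 'rV[C]_N) (x : 'rV[C]_N) : 'rV[C]_M :=
  \row_(k < M) cdot x (f k).

Definition inW (f : 'I_M -> 'rV[C]_N) (a : 'rV[C]_M) : Prop :=
  exists x : 'rV[C]_N, a = coeffs f x.

Definition inL (S : {set 'I_M}) (a : 'rV[C]_M) : Prop :=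
  forall i, i \in S -> a 0 i = 0.

Definition spans (f : 'I_M -> 'rV[C]_N) (S : {set 'I_M}) : Prop :=
  (1%:M <= \sum_(j in S) <<f j>>)%MS.

Definition is_frame (f : 'I_M -> 'rV[C]_N) : Prop := spans f setT.

(* M^F is injective (up to a global unimodular phase) *)
Definition phase_retrieval_injective (f : 'I_M -> 'rV[C]_N) : Prop :=
  forall x y : 'rV[C]_N,
    (forall k, `|cdot x (f k)| = `|cdot y (f k)|) ->
    exists c : C, `|c| = 1 /\ y = c *: x.
End FrameDefs.

From HB Require Import structures.
From mathcomp Require Import all_boot all_order all_algebra.
From mathcomp Require Import reals.
From mathcomp.real_closed Require Import complex.
Import Order.TTheory GRing.Theory Num.Theory.
Local Open Scope ring_scope.

(* If the coefficients of x vanish on S and those of y vanish off S, then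
   x + y and x - y have frame coefficients of equal moduli, so injectivity
   gives x - y = c (x + y) with |c| = 1.  Comparing a coordinate where the
   coefficients of x do not vanish forces c = 1, hence the coefficients of y
   vanish.  Both halves of the statement follow, because {f_j}_(j in S) fails to
   span exactly when a nonzero x has coefficients vanishing on S, and the
   coefficients of a nonzero x cannot all vanish when f is a frame. *)

Lemma row_free_mul_eq0P (F : fieldType) m n (A : 'M[F]_(m, n)) :
  row_free A <-> (forall v : 'rV_m, v *m A = 0 -> v = 0).
Proof.
split=> [freeA v /eqP | ]; last exact: inj_row_free.
by rewrite mulmx_free_eq0 // => /eqP.
Qed.

Lemma not_row_free_mul_eq0 (F : fieldType) m n (A : 'M[F]_(m, n)) :
  ~~ row_free A -> exists2 v : 'rV_m, v *m A = 0 & v != 0.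
Proof. by rewrite -kermx_eq0 => /rowV0Pn[v /sub_kermxP vA v0]; exists v. Qed.

Section Frames.
Context {R : realType} {N M : nat}.
Local Notation C := R[i].
Implicit Types (x y : 'rV[C]_N) (f : 'I_M -> 'rV[C]_N) (S : {set 'I_M}).

Definition frame_mx f S : 'M[C]_(M, N) :=
  \matrix_(k, j) (if k \in S then f k 0 j else 0).

Definition analysis_mx f S : 'M[C]_(N, M) := map_mx Num.conj (frame_mx f S)^T.

Lemma spans_row_full f S : spans f S <-> row_full (frame_mx f S).
Proof.
have rowS k : k \in S -> row k (frame_mx f S) = f k.
  by move=> kS; apply/rowP => j; rewrite !mxE kS.
rewrite /spans -sub1mx; split=> /submx_trans-> //.
  apply/sumsmx_subP => k kS; rewrite genmxE -rowS //; exact: row_sub.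
apply/row_subP => k; have [kS | kNS] := boolP (k \in S).
  by rewrite rowS //; apply: (sumsmx_sup k) => //; rewrite genmxE.
suff -> : row k (frame_mx f S) = 0 by apply: sub0mx.
by apply/rowP => j; rewrite !mxE (negbTE kNS).
Qed.

Lemma spans_analysis_mx f S : spans f S <-> row_free (analysis_mx f S).
Proof. by rewrite spans_row_full /analysis_mx row_free_map /row_free mxrank_tr. Qed.

Lemma mul_analysis_mx f S x :
  x *m analysis_mx f S = \row_k (if k \in S then cdot x (f k) else 0).
Proof.
apply/rowP => k; rewrite !mxE; case: ifP => kS.
  by apply: eq_bigr => j _; rewrite !mxE kS.
by rewrite big1 // => j _; rewrite !mxE kS rmorph0 mulr0.
Qed.

Lemma coeffsE f x : coeffs f x = x *m analysis_mx f setT.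
Proof. by rewrite mul_analysis_mx; apply/rowP => k; rewrite !mxE in_setT. Qed.

Lemma inL_coeffsP f S x : inL S (coeffs f x) <-> x *m analysis_mx f S = 0.
Proof.
rewrite mul_analysis_mx; split=> [Lx | /rowP x0 k kS].
  by apply/rowP => k; rewrite !mxE; case: ifP => // /Lx; rewrite mxE.
by move: (x0 k); rewrite !mxE kS.
Qed.

Lemma spans_inL_coeffs f S x : spans f S -> inL S (coeffs f x) -> x = 0.
Proof.
by move=> /spans_analysis_mx/row_free_mul_eq0P inj /inL_coeffsP; apply: inj.
Qed.

Lemma spans_or_inL_coeffs f S :
  spans f S \/ exists2 x, inL S (coeffs f x) & x != 0.
Proof.
have [/spans_analysis_mx | ] := boolP (row_free (analysis_mx f S)); first by left.
by move=> /not_row_free_mul_eq0[x /inL_coeffsP Lx x0]; right; exists x.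
Qed.

Lemma coeffs_frame_eq0 {f} : is_frame f -> forall x, coeffs f x = 0 -> x = 0.
Proof. by move=> fr x cx0; apply: spans_inL_coeffs fr _ => k _; rewrite cx0 mxE. Qed.

Lemma coeffs_complementary_eq0 {f S x y} : phase_retrieval_injective f ->
  inL S (coeffs f x) -> inL (~: S) (coeffs f y) ->
  coeffs f x = 0 \/ coeffs f y = 0.
Proof.
move=> inj Lx Ly; set a := coeffs f x; set b := coeffs f y.
have [->|/rV0Pn[k ak]] := eqVneq a 0; [by left | right].
have supp j : a 0 j = 0 \/ b 0 j = 0.
  by have [/Lx | jS] := boolP (j \in S); [left | right; apply: Ly; rewrite inE].
have coeffs_entry z j : coeffs f z 0 j = cdot z (f j) by rewrite mxE.
have coeffsD : coeffs f (x + y) = a + b by rewrite /a /b !coeffsE mulmxDl.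
have coeffsB : coeffs f (x - y) = a - b by rewrite /a /b !coeffsE mulmxBl.
clearbody a b.
have [c [_ xyc]] : exists c : C, `|c| = 1 /\ x - y = c *: (x + y).
  apply: inj => j; rewrite -!coeffs_entry coeffsD coeffsB !mxE.
  by case: (supp j) => ->; rewrite ?add0r ?sub0r ?normrN ?addr0 ?subr0.
have abc : a - b = c *: (a + b) by rewrite -coeffsB -coeffsD xyc !coeffsE scalemxAl.
have c1 : c = 1.
  move/rowP/(_ k): abc; rewrite !mxE.
  case: (supp k) => [ak0 | ->]; first by rewrite ak0 eqxx in ak.
  by rewrite subr0 addr0 -{1}[a 0 k]mul1r => /(mulIf ak).
have Nb : - b = b by apply: (addrI a); rewrite abc c1 scale1r.
have /eqP : 2%:R *: b = 0 by rewrite scaler_nat mulr2n -{1}Nb addNr.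
by rewrite scaler_eq0 pnatr_eq0 => /eqP.
Qed.

End Frames.

Theorem proposition3p5 (R : realType) (N M : nat) (f : 'I_M -> 'rV[R[i]]_N) :
  is_frame f -> phase_retrieval_injective f ->
  (forall S : {set 'I_M},
     (exists a, inL S a /\ inW f a /\ a <> 0) ->
     (forall a, inL (~: S) a -> inW f a -> a = 0))
  /\
  (forall S : {set 'I_M}, spans f S \/ spans f (~: S)).
Proof.
move=> frame inj; split=> [S [a [La [[x ax] a0]]] b Lb [y yb] | S].
  by subst a b; case: (coeffs_complementary_eq0 inj La Lb).
have [|[x Lx x0]] := spans_or_inL_coeffs f S; first by left.
have [|[y Ly y0]] := spans_or_inL_coeffs f (~: S); first by right.
case: (coeffs_complementary_eq0 inj Lx Ly) => /(coeffs_frame_eq0 frame) xy0.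
  by rewrite xy0 eqxx in x0.
by rewrite xy0 eqxx in y0.
Qed.
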